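(* Let $X_1,X_2,X_3$ be independent real variables ranging over the open positive orthant $(0,\infty)^3$, and consider the first-order linear system of partial differential equations for an unknown smooth function $\tau=\tau(X_1,X_2,X_3)$: $$\Big(X_1(X_1+2X_2+2X_3)\frac{\partial}{\partial X_1}+X_2(X_2+2X_3)\frac{\partial}{\partial X_2}+X_3^2\frac{\partial}{\partial X_3}\Big)\tau=0,\qquad \Big(X_1\frac{\partial}{\partial X_1}+X_2\frac{\partial}{\partial X_2}+X_3\frac{\partial}{\partial X_3}\Big)\tau=0 .$$ Then the function $$\tau_1^{(2)}(X_1,X_2,X_3)=\frac{(X_1+X_2)(X_2+X_3)}{X_2\,(X_1+X_2+X_3)}$$ is a solution of this system, and it is the only nontrivial solution up to functional dependence: every solution is (locally) of the form $F\big(\tau_1^{(2)}\big)$ for some function $F$ of one variable.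
   Context: This system arises in the construction of the lattice $W_2$ algebra (the $\mathfrak{sl}_2$ case): the first operator comes from the action of the screening operator $X_1+X_2+X_3$ via the bracket $\{X_i,X_j\}=2X_iX_j$ for $i<j$, $\{X_i,X_i\}=0$, and the second operator is the degree (Euler) operator, so solutions are degree-zero invariants. *)

From Stdlib Require Import Reals.
From Coquelicot Require Import Coquelicot.
Open Scope R_scope.

Definition orthant (x1 x2 x3 : R) : Prop := 0 < x1 /\ 0 < x2 /\ 0 < x3.

Definition d1 (f : R -> R -> R -> R) : R -> R -> R -> R :=
  fun x1 x2 x3 => Derive (fun t => f t x2 x3) x1.
Definition d2 (f : R -> R -> R -> R) : R -> R -> R -> R :=
  fun x1 x2 x3 => Derive (fun t => f x1 t x3) x2.
Definition d3 (f : R -> R -> R -> R) : R -> R -> R -> R :=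
  fun x1 x2 x3 => Derive (fun t => f x1 x2 t) x3.

Definition has_partials (f : R -> R -> R -> R) (x1 x2 x3 : R) : Prop :=
  ex_derive (fun t => f t x2 x3) x1 /\
  ex_derive (fun t => f x1 t x3) x2 /\
  ex_derive (fun t => f x1 x2 t) x3.

Definition cont3_at (f : R -> R -> R -> R) (x1 x2 x3 : R) : Prop :=
  forall eps, 0 < eps -> exists delta, 0 < delta /\
    forall y1 y2 y3, Rabs (y1 - x1) < delta -> Rabs (y2 - x2) < delta ->
      Rabs (y3 - x3) < delta -> Rabs (f y1 y2 y3 - f x1 x2 x3) < eps.

Fixpoint Ck_orthant (k : nat) (f : R -> R -> R -> R) : Prop :=
  match k with
  | O => forall x1 x2 x3, orthant x1 x2 x3 -> cont3_at f x1 x2 x3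
  | S m => (forall x1 x2 x3, orthant x1 x2 x3 -> cont3_at f x1 x2 x3) /\
           (forall x1 x2 x3, orthant x1 x2 x3 -> has_partials f x1 x2 x3) /\
           Ck_orthant m (d1 f) /\ Ck_orthant m (d2 f) /\ Ck_orthant m (d3 f)
  end.

Definition smooth_orthant (f : R -> R -> R -> R) : Prop :=
  forall k, Ck_orthant k f.

Definition L1 (f : R -> R -> R -> R) (x1 x2 x3 : R) : R :=
  x1 * (x1 + 2 * x2 + 2 * x3) * d1 f x1 x2 x3
  + x2 * (x2 + 2 * x3) * d2 f x1 x2 x3
  + x3 ^ 2 * d3 f x1 x2 x3.

Definition L2 (f : R -> R -> R -> R) (x1 x2 x3 : R) : R :=
  x1 * d1 f x1 x2 x3 + x2 * d2 f x1 x2 x3 + x3 * d3 f x1 x2 x3.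

Definition is_solution (tau : R -> R -> R -> R) : Prop :=
  forall x1 x2 x3, orthant x1 x2 x3 ->
    has_partials tau x1 x2 x3 /\ L1 tau x1 x2 x3 = 0 /\ L2 tau x1 x2 x3 = 0.

Definition tau12 (x1 x2 x3 : R) : R :=
  (x1 + x2) * (x2 + x3) / (x2 * (x1 + x2 + x3)).

(* Conversely, L2 is
   the Euler operator, so a solution is constant on rays and
   tau (y1, y2, y3) = tau (y1 / y2, 1, y3 / y2).  In the plane x2 = 1 the
   combination L1 - (x2 + 2 x3) L2 = x1 (x1 + x2) d1 - x3 (x2 + x3) d3 is
   tangent to the level curves of tau12, so tau is constant along them and
   tau = F o tau12 on the whole orthant, with F c = tau (2c - 1, 1, 2c - 2).
   Both constancy statements rest on the chain rule for C^1 functions of three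
   variables, proved from the mean value theorem. *)

From Stdlib Require Import Reals Lra.
From Coquelicot Require Import Coquelicot.
Open Scope R_scope.

Lemma is_derive_linear_approx (g : R -> R) (t l : R) :
  is_derive g t l <->
  forall eps : posreal,
    locally t (fun y => Rabs (g y - g t - (y - t) * l) <= eps * Rabs (y - t)).
Proof.
  unfold is_derive, filterdiff, is_domin. split.
  - intros [_ Hdom] eps. exact (Hdom t (fun P HP => HP) eps).
  - intros Happrox. split; [apply is_linear_scal_l|].
    intros x Hx eps. apply (is_filter_lim_locally_unique (V := R_NormedModule)) in Hx. subst x.
    exact (Happrox eps).
Qed.

Lemma mvt_linear_bound (h : R -> R) (a b D e : R) :
  (forall c, Rabs (c - a) <= Rabs (b - a) -> ex_derive h c /\ Rabs (Derive h c - D) <= e) ->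
  Rabs (h b - h a - D * (b - a)) <= e * Rabs (b - a).
Proof.
  intros Hh.
  destruct (MVT_cor4 h (Derive h) a (Rabs (b - a))) with b as [c [Hmvt Hc]].
  - intros c Hc. apply Derive_correct, Hh, Hc.
  - apply Rle_refl.
  - rewrite Hmvt, <- Rmult_minus_distr_r, Rabs_mult.
    apply Rmult_le_compat_r; [apply Rabs_pos | apply Hh, Hc].
Qed.

Definition differentiable3_at (f : R -> R -> R -> R) (p1 p2 p3 D1 D2 D3 : R) : Prop :=
  forall eps, 0 < eps -> exists delta, 0 < delta /\
    forall a1 a2 a3,
      Rabs (a1 - p1) < delta -> Rabs (a2 - p2) < delta -> Rabs (a3 - p3) < delta ->
      Rabs (f a1 a2 a3 - f p1 p2 p3 - (D1 * (a1 - p1) + D2 * (a2 - p2) + D3 * (a3 - p3)))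
        <= eps * (Rabs (a1 - p1) + Rabs (a2 - p2) + Rabs (a3 - p3)).

Lemma Rabs_lin3 (D1 D2 D3 u1 u2 u3 : R) :
  Rabs (D1 * u1 + D2 * u2 + D3 * u3)
    <= Rabs D1 * Rabs u1 + Rabs D2 * Rabs u2 + Rabs D3 * Rabs u3.
Proof.
  rewrite <- !Rabs_mult.
  eapply Rle_trans; [apply Rabs_triang|].
  apply Rplus_le_compat_r, Rabs_triang.
Qed.

Lemma differentiable3_of_partials (f : R -> R -> R -> R) (p1 p2 p3 r : R) :
  0 < r ->
  (forall y1 y2 y3, Rabs (y1 - p1) < r -> Rabs (y2 - p2) < r -> Rabs (y3 - p3) < r ->
     has_partials f y1 y2 y3) ->
  cont3_at (d1 f) p1 p2 p3 -> cont3_at (d2 f) p1 p2 p3 -> cont3_at (d3 f) p1 p2 p3 ->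
  differentiable3_at f p1 p2 p3 (d1 f p1 p2 p3) (d2 f p1 p2 p3) (d3 f p1 p2 p3).
Proof.
  intros Hr Hp C1 C2 C3 e He.
  destruct (C1 e He) as [e1 [He1 H1]].
  destruct (C2 e He) as [e2 [He2 H2]].
  destruct (C3 e He) as [e3 [He3 H3]].
  exists (Rmin r (Rmin e1 (Rmin e2 e3))).
  pose proof (Rmin_l r (Rmin e1 (Rmin e2 e3))); pose proof (Rmin_r r (Rmin e1 (Rmin e2 e3))).
  pose proof (Rmin_l e1 (Rmin e2 e3)); pose proof (Rmin_r e1 (Rmin e2 e3)).
  pose proof (Rmin_l e2 e3); pose proof (Rmin_r e2 e3).
  split; [repeat apply Rmin_pos; lra|].
  intros a1 a2 a3 A1 A2 A3.
  assert (Z : forall x, Rabs (x - x) = 0) by (intros; rewrite Rminus_diag; apply Rabs_R0).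
  assert (T1 : Rabs (f a1 a2 a3 - f p1 a2 a3 - d1 f p1 p2 p3 * (a1 - p1)) <= e * Rabs (a1 - p1)).
  { apply (mvt_linear_bound (fun t => f t a2 a3)). intros c Hc. split.
    - apply (Hp c a2 a3); lra.
    - left; apply (H1 c a2 a3); lra. }
  assert (T2 : Rabs (f p1 a2 a3 - f p1 p2 a3 - d2 f p1 p2 p3 * (a2 - p2)) <= e * Rabs (a2 - p2)).
  { apply (mvt_linear_bound (fun t => f p1 t a3)). intros c Hc. split.
    - apply (Hp p1 c a3); rewrite ?Z; lra.
    - left; apply (H2 p1 c a3); rewrite ?Z; lra. }
  assert (T3 : Rabs (f p1 p2 a3 - f p1 p2 p3 - d3 f p1 p2 p3 * (a3 - p3)) <= e * Rabs (a3 - p3)).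
  { apply (mvt_linear_bound (fun t => f p1 p2 t)). intros c Hc. split.
    - apply (Hp p1 p2 c); rewrite ?Z; lra.
    - left; apply (H3 p1 p2 c); rewrite ?Z; lra. }
  match goal with |- Rabs ?E <= _ =>
    replace E with ((f a1 a2 a3 - f p1 a2 a3 - d1 f p1 p2 p3 * (a1 - p1))
                    + (f p1 a2 a3 - f p1 p2 a3 - d2 f p1 p2 p3 * (a2 - p2))
                    + (f p1 p2 a3 - f p1 p2 p3 - d3 f p1 p2 p3 * (a3 - p3))) by ring end.
  eapply Rle_trans; [apply Rabs_triang|].
  eapply Rle_trans; [apply Rplus_le_compat_r, Rabs_triang|].
  lra.
Qed.

Lemma Rabs_le_of_approx (u h l e : R) :
  e <= 1 -> Rabs (u - h * l) <= e * Rabs h -> Rabs u <= (Rabs l + 1) * Rabs h.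
Proof.
  intros He Hu.
  replace u with ((u - h * l) + h * l) by ring.
  eapply Rle_trans; [apply Rabs_triang|].
  rewrite Rabs_mult. pose proof (Rabs_pos h). nra.
Qed.

Lemma chain3_error_bound (F D1 D2 D3 u1 u2 u3 l1 l2 l3 h a e : R) :
  0 <= a -> 0 <= e <= 1 ->
  Rabs (F - (D1 * u1 + D2 * u2 + D3 * u3)) <= a * (Rabs u1 + Rabs u2 + Rabs u3) ->
  Rabs (u1 - h * l1) <= e * Rabs h ->
  Rabs (u2 - h * l2) <= e * Rabs h ->
  Rabs (u3 - h * l3) <= e * Rabs h ->
  Rabs (F - h * (D1 * l1 + D2 * l2 + D3 * l3))
    <= (a * (Rabs l1 + Rabs l2 + Rabs l3 + 3) + (Rabs D1 + Rabs D2 + Rabs D3) * e) * Rabs h.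
Proof.
  intros Ha He HF B1 B2 B3.
  pose proof (Rabs_le_of_approx _ _ _ _ (proj2 He) B1).
  pose proof (Rabs_le_of_approx _ _ _ _ (proj2 He) B2).
  pose proof (Rabs_le_of_approx _ _ _ _ (proj2 He) B3).
  replace (F - h * (D1 * l1 + D2 * l2 + D3 * l3))
    with ((F - (D1 * u1 + D2 * u2 + D3 * u3))
          + (D1 * (u1 - h * l1) + D2 * (u2 - h * l2) + D3 * (u3 - h * l3))) by ring.
  eapply Rle_trans; [apply Rabs_triang|].
  pose proof (Rabs_lin3 D1 D2 D3 (u1 - h * l1) (u2 - h * l2) (u3 - h * l3)).
  pose proof (Rmult_le_compat_l _ _ _ (Rabs_pos D1) B1).
  pose proof (Rmult_le_compat_l _ _ _ (Rabs_pos D2) B2).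
  pose proof (Rmult_le_compat_l _ _ _ (Rabs_pos D3) B3).
  assert (a * (Rabs u1 + Rabs u2 + Rabs u3)
          <= a * ((Rabs l1 + Rabs l2 + Rabs l3 + 3) * Rabs h))
    by (apply Rmult_le_compat_l; lra).
  nra.
Qed.

Lemma is_derive_comp3 (f : R -> R -> R -> R) (g1 g2 g3 : R -> R) (t l1 l2 l3 D1 D2 D3 : R) :
  differentiable3_at f (g1 t) (g2 t) (g3 t) D1 D2 D3 ->
  is_derive g1 t l1 -> is_derive g2 t l2 -> is_derive g3 t l3 ->
  is_derive (fun s => f (g1 s) (g2 s) (g3 s)) t (D1 * l1 + D2 * l2 + D3 * l3).
Proof.
  rewrite !is_derive_linear_approx. intros Hf G1 G2 G3 eps.
  set (M := Rabs l1 + Rabs l2 + Rabs l3 + 3).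
  set (K := Rabs D1 + Rabs D2 + Rabs D3).
  pose proof (Rabs_pos l1); pose proof (Rabs_pos l2); pose proof (Rabs_pos l3).
  pose proof (Rabs_pos D1); pose proof (Rabs_pos D2); pose proof (Rabs_pos D3).
  assert (HM : 0 < M) by (unfold M; lra).
  assert (HK : 0 < K + 1) by (unfold K; lra).
  pose proof (cond_pos eps) as Heps.
  destruct (Hf (eps / (2 * M))) as [df [Hdf Hfapprox]].
  { apply Rdiv_lt_0_compat; lra. }
  assert (Heta : 0 < Rmin 1 (eps / (2 * (K + 1)))).
  { apply Rmin_pos; [lra | apply Rdiv_lt_0_compat; lra]. }
  set (eta := mkposreal _ Heta).
  assert (Heta1 : eta <= 1) by apply Rmin_l.
  assert (HetaK : K * eta <= eps / 2).
  { apply Rle_trans with ((K + 1) * (eps / (2 * (K + 1)))); [|right; field; lra].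
    apply Rle_trans with ((K + 1) * eta); [pose proof (cond_pos eta); lra|].
    apply Rmult_le_compat_l; [lra | apply Rmin_r]. }
  assert (Hnear : locally t (fun y => Rabs (y - t) < df / M)).
  { exists (mkposreal _ (Rdiv_lt_0_compat _ _ Hdf HM)). intros y Hy. exact Hy. }
  generalize (filter_and _ _ Hnear (filter_and _ _ (G1 eta) (filter_and _ _ (G2 eta) (G3 eta)))).
  apply filter_imp. intros y [Hy [B1 [B2 B3]]].
  assert (Hsmall : forall u l, Rabs (u - (y - t) * l) <= eta * Rabs (y - t) ->
                    Rabs l + 1 <= M -> Rabs u < df).
  { intros u l Hu Hl. apply (Rle_lt_trans _ _ _ (Rabs_le_of_approx _ _ _ _ Heta1 Hu)).
    apply (Rle_lt_trans _ (M * Rabs (y - t))).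
    - apply Rmult_le_compat_r; [apply Rabs_pos | exact Hl].
    - replace df with (M * (df / M)) by (field; lra). apply Rmult_lt_compat_l; lra. }
  specialize (Hfapprox (g1 y) (g2 y) (g3 y) (Hsmall _ _ B1 ltac:(unfold M; lra))
                (Hsmall _ _ B2 ltac:(unfold M; lra)) (Hsmall _ _ B3 ltac:(unfold M; lra))).
  assert (Ha : 0 <= eps / (2 * M)) by (apply Rlt_le, Rdiv_lt_0_compat; lra).
  eapply Rle_trans.
  { apply (chain3_error_bound _ _ _ _ _ _ _ _ _ _ _ _ _ Ha
             (conj (Rlt_le _ _ (cond_pos eta)) Heta1) Hfapprox B1 B2 B3). }
  fold M K. apply Rmult_le_compat_r; [apply Rabs_pos|].
  replace (eps / (2 * M) * M) with (eps / 2) by (field; lra). lra.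
Qed.

Lemma orthant_nbhd (x1 x2 x3 : R) : orthant x1 x2 x3 ->
  exists r, 0 < r /\ forall y1 y2 y3,
    Rabs (y1 - x1) < r -> Rabs (y2 - x2) < r -> Rabs (y3 - x3) < r -> orthant y1 y2 y3.
Proof.
  intros [P1 [P2 P3]].
  exists (Rmin x1 (Rmin x2 x3)). split; [repeat apply Rmin_pos; assumption|].
  pose proof (Rmin_l x1 (Rmin x2 x3)); pose proof (Rmin_r x1 (Rmin x2 x3)).
  pose proof (Rmin_l x2 x3); pose proof (Rmin_r x2 x3).
  intros y1 y2 y3 A1 A2 A3.
  apply Rabs_def2 in A1, A2, A3. unfold orthant; lra.
Qed.

Lemma is_derive_comp_orthant (tau : R -> R -> R -> R) (g1 g2 g3 : R -> R) (t l1 l2 l3 D : R) :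
  Ck_orthant 1 tau -> orthant (g1 t) (g2 t) (g3 t) ->
  is_derive g1 t l1 -> is_derive g2 t l2 -> is_derive g3 t l3 ->
  D = d1 tau (g1 t) (g2 t) (g3 t) * l1 + d2 tau (g1 t) (g2 t) (g3 t) * l2
      + d3 tau (g1 t) (g2 t) (g3 t) * l3 ->
  is_derive (fun s => tau (g1 s) (g2 s) (g3 s)) t D.
Proof.
  intros [_ [Hp [C1 [C2 C3]]]] Ho G1 G2 G3 ->.
  destruct (orthant_nbhd _ _ _ Ho) as [r [Hr Hnbhd]].
  apply is_derive_comp3; [|assumption..].
  apply (differentiable3_of_partials _ _ _ _ r Hr); auto.
Qed.

Lemma eq_is_derive_pos (g : R -> R) :
  (forall t, 0 < t -> is_derive g t 0) -> forall a b, 0 < a -> 0 < b -> g a = g b.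
Proof.
  intros Hg a b Ha Hb.
  destruct (Rtotal_order a b) as [Hab | [-> | Hab]]; [| reflexivity |].
  - apply eq_is_derive; [|exact Hab]. intros t Ht. apply Hg. lra.
  - symmetry. apply eq_is_derive; [|exact Hab]. intros t Ht. apply Hg. lra.
Qed.

Lemma solution_homogeneous (tau : R -> R -> R -> R) :
  Ck_orthant 1 tau -> is_solution tau ->
  forall y1 y2 y3 lam, orthant y1 y2 y3 -> 0 < lam ->
  tau (lam * y1) (lam * y2) (lam * y3) = tau y1 y2 y3.
Proof.
  intros Htau Hsol y1 y2 y3 lam [P1 [P2 P3]] Hlam.
  transitivity (tau (1 * y1) (1 * y2) (1 * y3)); [|now rewrite !Rmult_1_l].
  apply (eq_is_derive_pos (fun s => tau (s * y1) (s * y2) (s * y3))); [|lra..].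
  intros s Hs.
  assert (Ho : orthant (s * y1) (s * y2) (s * y3))
    by (repeat split; apply Rmult_lt_0_compat; assumption).
  apply (is_derive_comp_orthant _ _ _ _ _ y1 y2 y3 _ Htau Ho);
    [auto_derive; [trivial | ring] ..|].
  destruct (Hsol _ _ _ Ho) as [_ [_ HL2]]. unfold L2 in HL2.
  apply Rmult_eq_reg_l with s; [|lra].
  rewrite Rmult_0_r, <- HL2. ring.
Qed.

Lemma L1_sub_L2 (f : R -> R -> R -> R) (x1 x2 x3 : R) :
  L1 f x1 x2 x3 - (x2 + 2 * x3) * L2 f x1 x2 x3
  = x1 * (x1 + x2) * d1 f x1 x2 x3 - x3 * (x2 + x3) * d3 f x1 x2 x3.
Proof. unfold L1, L2. ring. Qed.

(* In the plane [x2 = 1] the level set [tau12 = c] is the hyperbola branch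
   [(x1 + 1 - c) (x3 + 1 - c) = c (c - 1)], parametrized here by [s = x1 + 1 - c]. *)
Lemma solution_const_on_level_curve (tau : R -> R -> R -> R) :
  Ck_orthant 1 tau -> is_solution tau ->
  forall c s s', 1 < c -> 0 < s -> 0 < s' ->
  tau (c - 1 + s) 1 ((c - 1) * (1 + c / s)) = tau (c - 1 + s') 1 ((c - 1) * (1 + c / s')).
Proof.
  intros Htau Hsol c s0 s0' Hc Hs0 Hs0'.
  apply (eq_is_derive_pos (fun s => tau (c - 1 + s) 1 ((c - 1) * (1 + c / s)))); [|assumption..].
  intros s Hs.
  assert (Hq : 0 < (c - 1) * (1 + c / s)).
  { apply Rmult_lt_0_compat; [lra|]. pose proof (Rdiv_lt_0_compat c s ltac:(lra) Hs). lra. }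
  assert (Ho : orthant (c - 1 + s) 1 ((c - 1) * (1 + c / s))) by (repeat split; lra).
  apply (is_derive_comp_orthant _ _ _ _ _ 1 0 (- (c - 1) * c / s ^ 2) _ Htau Ho).
  - auto_derive; [trivial | ring].
  - apply (is_derive_const (V := R_NormedModule)).
  - auto_derive; [lra | field; lra].
  - destruct (Hsol _ _ _ Ho) as [_ [HL1 HL2]].
    pose proof (L1_sub_L2 tau (c - 1 + s) 1 ((c - 1) * (1 + c / s))) as E.
    rewrite HL1, HL2, Rmult_0_r, Rminus_0_r in E.
    apply Rmult_eq_reg_l with ((c - 1 + s) * (c + s)); [|nra].
    rewrite Rmult_0_r. etransitivity; [exact E|]. field. lra.
Qed.

Lemma tau12_scale (lam y1 y2 y3 : R) : 0 < lam -> orthant y1 y2 y3 ->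
  tau12 (lam * y1) (lam * y2) (lam * y3) = tau12 y1 y2 y3.
Proof.
  intros Hlam [P1 [P2 P3]]. unfold tau12. field. repeat split; nra.
Qed.

Lemma tau12_on_level_curve (z1 z3 : R) : 0 < z1 -> 0 < z3 ->
  let c := tau12 z1 1 z3 in
  1 < c /\ 0 < z1 + 1 - c /\ z3 = (c - 1) * (1 + c / (z1 + 1 - c)).
Proof.
  intros H1 H3 c.
  assert (Ec1 : c - 1 = z1 * z3 / (z1 + 1 + z3)) by (unfold c, tau12; field; lra).
  assert (Es : z1 + 1 - c = (z1 + 1) * z1 / (z1 + 1 + z3)) by (unfold c, tau12; field; lra).
  split; [|split].
  - enough (0 < c - 1) by lra. rewrite Ec1. apply Rdiv_lt_0_compat; nra.
  - rewrite Es. apply Rdiv_lt_0_compat; nra.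
  - rewrite Es, Ec1. unfold c, tau12. field. repeat split; lra.
Qed.

Lemma solution_factors_through_tau12 (tau : R -> R -> R -> R) :
  Ck_orthant 1 tau -> is_solution tau ->
  forall y1 y2 y3, orthant y1 y2 y3 ->
  tau y1 y2 y3 = tau (2 * tau12 y1 y2 y3 - 1) 1 (2 * tau12 y1 y2 y3 - 2).
Proof.
  intros Htau Hsol y1 y2 y3 Hy. pose proof Hy as [P1 [P2 P3]].
  assert (Hinv : 0 < / y2) by (apply Rinv_0_lt_compat; lra).
  rewrite <- (solution_homogeneous tau Htau Hsol y1 y2 y3 (/ y2) Hy Hinv).
  rewrite <- (tau12_scale (/ y2) y1 y2 y3 Hinv Hy).
  replace (/ y2 * y2) with 1 by (field; lra).
  set (z1 := / y2 * y1). set (z3 := / y2 * y3).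
  assert (Hz1 : 0 < z1) by (apply Rmult_lt_0_compat; lra).
  assert (Hz3 : 0 < z3) by (apply Rmult_lt_0_compat; lra).
  destruct (tau12_on_level_curve z1 z3 Hz1 Hz3) as [Hc [Hs Ez3]].
  set (c := tau12 z1 1 z3) in *.
  rewrite Ez3. replace z1 with (c - 1 + (z1 + 1 - c)) at 1 by ring.
  rewrite (solution_const_on_level_curve tau Htau Hsol c _ c Hc Hs ltac:(lra)).
  f_equal; field; lra.
Qed.

Lemma tau12_is_solution : is_solution tau12.
Proof.
  intros x1 x2 x3 [P1 [P2 P3]].
  set (N := (x2 * (x1 + x2 + x3)) * (x2 * (x1 + x2 + x3))).
  assert (E1 : is_derive (fun t => tau12 t x2 x3) x1 (x2 * x3 * (x2 + x3) / N)).
  { unfold tau12, N. auto_derive; [nra | field; nra]. }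
  assert (E2 : is_derive (fun t => tau12 x1 t x3) x2 (- (x1 * x3 * (x1 + 2 * x2 + x3)) / N)).
  { unfold tau12, N. auto_derive; [nra | field; nra]. }
  assert (E3 : is_derive (fun t => tau12 x1 x2 t) x3 (x1 * x2 * (x1 + x2) / N)).
  { unfold tau12, N. auto_derive; [nra | field; nra]. }
  split; [repeat split; eexists; eassumption|].
  assert (F1 : d1 tau12 x1 x2 x3 = x2 * x3 * (x2 + x3) / N) by exact (is_derive_unique _ _ _ E1).
  assert (F2 : d2 tau12 x1 x2 x3 = - (x1 * x3 * (x1 + 2 * x2 + x3)) / N)
    by exact (is_derive_unique _ _ _ E2).
  assert (F3 : d3 tau12 x1 x2 x3 = x1 * x2 * (x1 + x2) / N) by exact (is_derive_unique _ _ _ E3).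
  unfold L1, L2. rewrite F1, F2, F3.
  assert (0 < N) by (unfold N; apply Rmult_lt_0_compat; nra).
  split; field; lra.
Qed.

Theorem mainTheorem1 :
  is_solution tau12 /\
  (forall tau : R -> R -> R -> R,
     smooth_orthant tau -> is_solution tau ->
     forall x1 x2 x3, orthant x1 x2 x3 ->
       exists delta, 0 < delta /\
       exists F : R -> R,
         forall y1 y2 y3, orthant y1 y2 y3 ->
           Rabs (y1 - x1) < delta -> Rabs (y2 - x2) < delta ->
           Rabs (y3 - x3) < delta ->
           tau y1 y2 y3 = F (tau12 y1 y2 y3)).
Proof.
  split; [exact tau12_is_solution|].
  intros tau Hsmooth Hsol x1 x2 x3 _.
  exists 1. split; [lra|].
  exists (fun c => tau (2 * c - 1) 1 (2 * c - 2)).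
  intros y1 y2 y3 Hy _ _ _.
  exact (solution_factors_through_tau12 tau (Hsmooth 1%nat) Hsol y1 y2 y3 Hy).
Qed.
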